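(* In the modal logic $\mathrm{SN}$ (defined in the context): if $\vdash A\to B$ then $\vdash NB\to NA$; and if $\vdash A\leftrightarrow B$ then $\vdash NA\leftrightarrow NB$.
   Context: $\mathrm{SN}$ is the logic whose formulas are built from propositional atoms $p$, constants $\top,\bot$ and a propositional constant $t$, using $\neg,\wedge,\vee,\to$ and a unary connective $N$ (which may be applied to any formula and iterated). Its theorems ($\vdash A$) are generated by: all classical tautologies (in this language); the axioms (K) $N(A\wedge B)\leftrightarrow NA\vee NB$; (F) $\neg NA\leftrightarrow N\neg A$; (C) $A\to NNA$; (A) $t\to(p\to N\neg p)$ for atoms $p$; (T) $t\leftrightarrow Nt$; and the rules modus ponens (from $A$ and $A\to B$ infer $B$) and (N) from $A$ infer $N\neg A$. *)

From Stdlib Require Import Bool.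

Inductive form : Type :=
| Atom : nat -> form
| Top : form
| Bot : form
| Tconst : form
| Neg : form -> form
| And : form -> form -> form
| Or : form -> form -> form
| Imp : form -> form -> form
| Nmod : form -> form.

Definition Iff (A B : form) : form := And (Imp A B) (Imp B A).

(* Classical truth-functional evaluation: atoms, t, and N-formulas are
   treated as propositional variables, assigned arbitrary values by v. *)
Fixpoint eval (v : form -> bool) (A : form) : bool :=
  match A with
  | Atom _ => v A
  | Top => true
  | Bot => false
  | Tconst => v A
  | Neg B => negb (eval v B)
  | And B C => eval v B && eval v C
  | Or B C => eval v B || eval v C
  | Imp B C => implb (eval v B) (eval v C)
  | Nmod _ => v A
  end.

Definition tautology (A : form) : Prop := forall v, eval v A = true.

Inductive thm : form -> Prop :=
| ax_taut : forall A, tautology A -> thm A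
| ax_K : forall A B, thm (Iff (Nmod (And A B)) (Or (Nmod A) (Nmod B)))
| ax_F : forall A, thm (Iff (Neg (Nmod A)) (Nmod (Neg A)))
| ax_C : forall A, thm (Imp A (Nmod (Nmod A)))
| ax_A : forall p, thm (Imp Tconst (Imp (Atom p) (Nmod (Neg (Atom p)))))
| ax_T : thm (Iff Tconst (Nmod Tconst))
| r_mp : forall A B, thm A -> thm (Imp A B) -> thm B
| r_N : forall A, thm A -> thm (Nmod (Neg A)).

(* From [|- A -> B] we get [|- ~(A /\ ~B)].  Rule (N) together with (F), used
   twice, turns any theorem [~C] into the theorem [N C]; hence
   [|- N(A /\ ~B)], which (K) splits into [N A \/ N ~B], i.e. by (F)
   [N A \/ ~N B]. *)

Lemma thm_mp_taut A C : thm A -> tautology (Imp A C) -> thm C.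
Proof. intros HA T. exact (r_mp _ _ HA (ax_taut _ T)). Qed.

Lemma thm_mp2_taut A B C :
  thm A -> thm B -> tautology (Imp A (Imp B C)) -> thm C.
Proof. intros HA HB T. exact (r_mp _ _ HB (r_mp _ _ HA (ax_taut _ T))). Qed.

Ltac decide_tautology :=
  let v := fresh "v" in
  intro v; simpl;
  repeat match goal with |- context [v ?X] => destruct (v X) end;
  repeat match goal with |- context [eval v ?X] => destruct (eval v X) end;
  reflexivity.

Lemma thm_Nmod_of_neg C : thm (Neg C) -> thm (Nmod C).
Proof.
  intro HnC.
  pose proof (r_N _ HnC) as HNnnC.
  assert (HnNnC : thm (Neg (Nmod (Neg C)))).
  { apply (thm_mp2_taut _ _ _ HNnnC (ax_F (Neg C))); decide_tautology. }
  apply (thm_mp2_taut _ _ _ HnNnC (ax_F C)); decide_tautology.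
Qed.

Lemma thm_Nmod_antimono A B : thm (Imp A B) -> thm (Imp (Nmod B) (Nmod A)).
Proof.
  intro HAB.
  assert (HN : thm (Nmod (And A (Neg B)))).
  { apply thm_Nmod_of_neg, (thm_mp_taut _ _ HAB); decide_tautology. }
  assert (HK : thm (Or (Nmod A) (Nmod (Neg B)))).
  { apply (thm_mp2_taut _ _ _ HN (ax_K A (Neg B))); decide_tautology. }
  apply (thm_mp2_taut _ _ _ HK (ax_F B)); decide_tautology.
Qed.

Lemma thm_Nmod_congr A B : thm (Iff A B) -> thm (Iff (Nmod A) (Nmod B)).
Proof.
  intro HAB.
  assert (HA_B : thm (Imp A B))
    by (apply (thm_mp_taut _ _ HAB); decide_tautology).
  assert (HB_A : thm (Imp B A))
    by (apply (thm_mp_taut _ _ HAB); decide_tautology).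
  apply (thm_mp2_taut _ _ _ (thm_Nmod_antimono _ _ HB_A)
           (thm_Nmod_antimono _ _ HA_B)).
  decide_tautology.
Qed.

Theorem lemma32 :
  (forall A B : form, thm (Imp A B) -> thm (Imp (Nmod B) (Nmod A))) /\
  (forall A B : form, thm (Iff A B) -> thm (Iff (Nmod A) (Nmod B))).
Proof. exact (conj thm_Nmod_antimono thm_Nmod_congr). Qed.
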